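(* Let $H\in\mathbb{R}^{n\times n}$ and $M\in\mathbb{R}^{m\times m}$ be symmetric positive semidefinite and $A\in\mathbb{R}^{m\times n}$. Let $l$ be an index and $\mathcal{B},\mathcal{N}$ index sets such that $\mathcal{B}$, $\{l\}$, $\mathcal{N}$ are pairwise disjoint with union $\{1,\dots,n\}$. Consider vectors $(\Delta x,\Delta y,\Delta z)\in\mathbb{R}^n\times\mathbb{R}^m\times\mathbb{R}^n$ satisfying \[ H\Delta x-A^T\Delta y-\Delta z=0,\quad A\Delta x+M\Delta y=0,\quad \Delta x_{\mathcal{N}}=0,\quad \Delta z_{\mathcal{B}}=0. \tag{$*$} \] Assume $K_l$ is nonsingular and let $\Delta z_l$ be a given nonnegative scalar. 1. If $\Delta z_l=0$, then the only solution of $( * )$ with this value of $\Delta z_l$ is zero, i.e., $\Delta x_l=0$, $\Delta x_{\mathcal{B}}=0$, $\Delta y=0$, $\Delta z_{\mathcal{N}}=0$. 2. If $\Delta z_l>0$, then the quantities $\Delta x_l,\Delta x_{\mathcal{B}},\Delta y,\Delta z_{\mathcal{N}}$ of a solution of $( * )$ with this value of $\Delta z_l$ are unique and satisfy \[ K_l\begin{pmatrix}\Delta x_l\\ \Delta x_{\mathcal{B}}\\ -\Delta y\end{pmatrix}=\begin{pmatrix}1\\0\\0\end{pmatrix}\Delta z_l,\qquad \Delta z_{\mathcal{N}}=h_{\mathcal{N}l}\Delta x_l+H_{\mathcal{B}\mathcal{N}}^T\Delta x_{\mathcal{B}}-A_{\mathcal{N}}^T\Delta y. \] Moreover, either (i)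 $K_{\mathcal{B}}$ is nonsingular and $\Delta x_l>0$, or (ii) $K_{\mathcal{B}}$ is singular and $\Delta x_l=0$, in which case $\Delta x_{\mathcal{B}}=0$ and the zero eigenvalue of $K_{\mathcal{B}}$ has multiplicity one with corresponding eigenvector $(0,\Delta y)$.
   Context: For index sets $S,T$: $w_S$ is the subvector of $w$ indexed by $S$; $H_{ST}$ is the submatrix of $H$ with rows in $S$ and columns in $T$; $A_S$ is the matrix of columns of $A$ indexed by $S$; $a_l$ is the $l$th column of $A$; $h_{ll}$ is the $l$th diagonal entry of $H$; $h_{Sl}$ is the column vector of entries $h_{il}$, $i\in S$. Define \[ K_{\mathcal{B}}=\begin{pmatrix}H_{\mathcal{B}\mathcal{B}}&A_{\mathcal{B}}^T\\ A_{\mathcal{B}}&-M\end{pmatrix},\qquad K_l=\begin{pmatrix}h_{ll}&h_{\mathcal{B}l}^T&a_l^T\\ h_{\mathcal{B}l}&H_{\mathcal{B}\mathcal{B}}&A_{\mathcal{B}}^T\\ a_l&A_{\mathcal{B}}&-M\end{pmatrix}. \] *)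

From HB Require Import structures.
From mathcomp Require Import all_boot all_order all_algebra.
Set Implicit Arguments. Unset Strict Implicit. Unset Printing Implicit Defensive.
Import Order.TTheory GRing.Theory Num.Theory.
Local Open Scope ring_scope.

Section Defs.
Variable R : realFieldType.

Definition sym_psd (n : nat) (H : 'M[R]_n) : Prop :=
  H^T = H /\ forall v : 'cV[R]_n, 0 <= (v^T *m H *m v) 0 0.

(* Index sets S are finite sets of 'I_n, enumerated increasingly via enum_val. *)
Definition subv (n : nat) (S : {set 'I_n}) (w : 'cV[R]_n) : 'cV[R]_#|S| :=
  \col_(i < #|S|) w (enum_val i) 0.
Definition subm (n : nat) (S T : {set 'I_n}) (H : 'M[R]_n) : 'M[R]_(#|S|, #|T|) :=
  \matrix_(i < #|S|, j < #|T|) H (enum_val i) (enum_val j).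
Definition subcols (m n : nat) (S : {set 'I_n}) (A : 'M[R]_(m, n)) : 'M[R]_(m, #|S|) :=
  \matrix_(i < m, j < #|S|) A i (enum_val j).
Definition subcol (n : nat) (S : {set 'I_n}) (l : 'I_n) (H : 'M[R]_n) : 'cV[R]_#|S| :=
  \col_(i < #|S|) H (enum_val i) l.

Definition KB (n m : nat) (H : 'M[R]_n) (A : 'M[R]_(m, n)) (M : 'M[R]_m)
  (B : {set 'I_n}) : 'M[R]_(#|B| + m) :=
  block_mx (subm B B H) (subcols B A)^T (subcols B A) (- M).

Definition Kl (n m : nat) (H : 'M[R]_n) (A : 'M[R]_(m, n)) (M : 'M[R]_m)
  (B : {set 'I_n}) (l : 'I_n) : 'M[R]_(1 + (#|B| + m)) :=
  block_mx (H l l)%:M (row_mx (subcol B l H)^T (col l A)^T)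
           (col_mx (subcol B l H) (col l A)) (KB H A M B).

Definition sys (n m : nat) (H : 'M[R]_n) (A : 'M[R]_(m, n)) (M : 'M[R]_m)
  (B N : {set 'I_n}) (dx : 'cV[R]_n) (dy : 'cV[R]_m) (dz : 'cV[R]_n) : Prop :=
  [/\ H *m dx - A^T *m dy - dz = 0,
      A *m dx + M *m dy = 0,
      (forall i, i \in N -> dx i 0 = 0) &
      (forall i, i \in B -> dz i 0 = 0)].

End Defs.

From HB Require Import structures.
From mathcomp Require Import all_boot all_order all_algebra.
From mathcomp Require Import lra.
Set Implicit Arguments. Unset Strict Implicit. Unset Printing Implicit Defensive.
Import Order.TTheory GRing.Theory Num.Theory.
Local Open Scope ring_scope.

(* Eliminating [dz] from ( * ) turns it into
   [K_l (dx_l; dx_B; -dy) = (dz_l; 0; 0)] together with an explicit formula for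
   [dz_N], so uniqueness and the explicit solution come from the invertibility
   of [K_l].  Pairing the first equation of ( * ) with [dx] gives
   [dx_l dz_l = dx^T H dx + dy^T M dy >= 0].  If [K_B] is singular, every null
   vector [w] of [K_B] has [(h_Bl; a_l)^T w <> 0] because [K_l] is nonsingular;
   so the null space of [K_B] is a line, and pairing the [K_l]-system with
   [(0; w)] forces [dx_l = 0].  Then [(dx_B; -dy)] is a null vector of [K_B],
   and positive semidefiniteness of [H] and [M], together with the
   nonsingularity of [K_l], forces [dx_B = 0].  Finally, a symmetric matrix
   whose null space is a line spanned by [v] with [v^T v <> 0] has [0] as a
   simple root of its characteristic polynomial. *)

Definition rowset (T : Type) m n (X : 'M[T]_(m, n)) (i0 : 'I_m) (r : 'rV[T]_n) :=
  \matrix_(i, j) if i == i0 then r 0 j else X i j.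

Section RowReplace.
Variable T : pzRingType.

Lemma mul_rowset m n p (X : 'M[T]_(m, n)) i0 r (Y : 'M[T]_(n, p)) :
  rowset X i0 r *m Y = rowset (X *m Y) i0 (r *m Y).
Proof.
apply/matrixP=> i j; rewrite !mxE; under eq_bigr do rewrite mxE.
by case: (i == i0).
Qed.

Lemma map_rowset (S : pzRingType) (f : T -> S) m n (X : 'M[T]_(m, n)) i0
    (r : 'rV[T]_n) :
  map_mx f (rowset X i0 r) = rowset (map_mx f X) i0 (map_mx f r).
Proof. by apply/matrixP=> i j; rewrite !mxE; case: (i == i0). Qed.

Lemma rowset_col_eq0 k (w : 'cV[T]_k) i0 (a : 'M[T]_1) :
  rowset w i0 a = 0 -> a = 0 /\ w = w i0 0 *: delta_mx i0 0.
Proof.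
move=> /matrixP w0; split.
  by apply/matrixP=> i j; have := w0 i0 0; rewrite !ord1 !mxE eqxx.
apply/matrixP=> i j; rewrite ord1 !mxE; case: eqVneq => [-> | ne].
  by rewrite eqxx mulr1.
by have := w0 i 0; rewrite !mxE mulr0 (negPf ne).
Qed.

End RowReplace.

Lemma det_rowsetZ (T : comPzRingType) k (X : 'M[T]_k) i0 a (r : 'rV[T]_k) :
  \det (rowset X i0 (a *: r)) = a * \det (rowset X i0 r).
Proof.
rewrite -[RHS]addr0 -(mul0r (\det (rowset X i0 r))).
apply: (determinant_multilinear (i0 := i0)); rewrite ?scale0r ?addr0.
- by apply/rowP=> j; rewrite !mxE eqxx.
- by apply/matrixP=> i j; rewrite !mxE eq_sym (negPf (neq_lift i0 i)).
- by apply/matrixP=> i j; rewrite !mxE eq_sym (negPf (neq_lift i0 i)).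
Qed.

Section NullSpace.
Variable F : fieldType.

Lemma unitmx_mul_eq0 k (K : 'M[F]_k) (z : 'cV[F]_k) :
  K \in unitmx -> K *m z = 0 -> z = 0.
Proof. by move=> uK Kz; rewrite -(mulKmx uK z) Kz mulmx0. Qed.

Lemma unitmxPn k (K : 'M[F]_k) :
  reflect (exists2 z : 'cV[F]_k, z != 0 & K *m z = 0) (K \notin unitmx).
Proof.
rewrite unitmxE unitfE negbK -det_tr.
apply: (iffP det0P) => [[v nz vK] | [z nz Kz]].
  by exists v^T; rewrite ?trmx_eq0 // -(trmxK K) -trmx_mul vK trmx0.
by exists z^T; rewrite ?trmx_eq0 // -trmx_mul Kz trmx0.
Qed.

Lemma rowset1_unitmx k (u : 'rV[F]_k) i0 : u 0 i0 != 0 -> rowset 1%:M i0 u \in unitmx.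
Proof.
move=> ui0; apply/unitmxPn => -[z nz]; rewrite mul_rowset mul1mx.
case/rowset_col_eq0 => uz zE.
have zi0 : z i0 0 = 0.
  have : (u *m z) 0 0 = 0 by rewrite uz mxE.
  rewrite {1}zE -scalemxAr -colE !mxE => /eqP.
  by rewrite mulf_eq0 (negPf ui0) orbF => /eqP.
by move: nz; rewrite zE zi0 scale0r eqxx.
Qed.

Lemma rowset_unitmx k (K : 'M[F]_k) (u : 'rV[F]_k) (v : 'cV[F]_k) i0 :
  u *m K = 0 -> (u *m v) 0 0 != 0 -> u 0 i0 != 0 ->
  (forall w, K *m w = 0 -> exists t, w = t *: v) ->
  rowset K i0 u \in unitmx.
Proof.
move=> uK uv ui0 kerK; apply/unitmxPn => -[z nz]; rewrite mul_rowset.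
case/rowset_col_eq0 => uz Kz.
have Kz0 : K *m z = 0.
  have : (u *m (K *m z)) 0 0 = 0 by rewrite mulmxA uK mul0mx mxE.
  rewrite {1}Kz -scalemxAr -colE mxE [col _ _ _ _]mxE => /eqP.
  by rewrite mulf_eq0 (negPf ui0) orbF => /eqP z0; rewrite Kz z0 scale0r.
have [t zt] := kerK z Kz0.
have : (u *m z) 0 0 = 0 by rewrite uz mxE.
rewrite zt -scalemxAr mxE => /eqP; rewrite mulf_eq0 (negPf uv) orbF => /eqP t0.
by move: nz; rewrite zt t0 scale0r eqxx.
Qed.

Lemma horner0_char_poly_mx k (K : 'M[F]_k) :
  map_mx (horner_eval 0) (char_poly_mx K) = - K.
Proof.
apply/matrixP=> i j; rewrite !mxE horner_evalE.
by rewrite hornerD hornerN hornerMn hornerX hornerC mul0rn sub0r.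
Qed.

Lemma mup0_char_poly_eq1 k (K : 'M[F]_k) (u : 'rV[F]_k) (v : 'cV[F]_k) :
  u *m K = 0 -> K *m v = 0 -> (u *m v) 0 0 != 0 ->
  (forall w, K *m w = 0 -> exists t, w = t *: v) ->
  mup 0 (char_poly K) = 1%N.
Proof.
(* With [P] the identity whose row [i0] is replaced by [u], the product
   [P ('X - K)] is ['X - K] with row [i0] replaced by ['X u], so
   [det P * char_poly K = 'X * det Q], and [Q] evaluated at [0] is invertible. *)
move=> uK Kv uv kerK.
have [i0 ui0] : exists i0, u 0 i0 != 0.
  apply/existsP; apply: contraNT uv => /existsPn u0.
  by rewrite mxE big1 // => j _; move/negbNE/eqP: (u0 j) => ->; rewrite mul0r.
pose P := rowset 1%:M i0 u; pose Q := rowset (char_poly_mx K) i0 (map_mx polyC u).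
have detPK : (\det P)%:P * char_poly K = 'X * \det Q.
  rewrite -det_map_mx -det_mulmx -det_rowsetZ map_rowset map_mx1 mul_rowset mul1mx.
  by rewrite /char_poly_mx mulmxBr mul_mx_scalar -map_mxM uK map_mx0 subr0.
have P_root : ~~ root (\det P)%:P 0 by rewrite rootC -unitfE -unitmxE rowset1_unitmx.
have Q_root : ~~ root (\det Q) 0.
  rewrite /root -horner_evalE -det_map_mx map_rowset horner0_char_poly_mx.
  have -> : map_mx (horner_eval 0) (map_mx polyC u) = u.
    by apply/matrixP=> i j; rewrite !mxE horner_evalE hornerC.
  rewrite -unitfE -unitmxE (rowset_unitmx (v := v)) ?mulmxN ?uK ?oppr0 // => w.
  by rewrite mulNmx => /eqP; rewrite oppr_eq0 => /eqP /kerK.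
rewrite -(mupMr _ P_root) detPK mupMl // -['X]subr0 -['X - _]expr1 mup_XsubCX.
by rewrite eqxx.
Qed.

End NullSpace.

Lemma quadratic_ge0_eq0 (R : realFieldType) (b c : R) :
  (forall t, 0 <= t * b *+ 2 + t ^+ 2 * c) -> b = 0.
Proof.
move=> h; have c_ge0 : 0 <= c by have := h 1; have := h (-1); lra.
(* At [t = -b/(c+1)] the quadratic equals [-b^2 (c+2) / (c+1)^2]. *)
have := h (- b / (c + 1)); set t := - b / (c + 1).
have ht : t * (c + 1) = - b by rewrite mulfVK // gt_eqF // ltr_wpDl.
nra.
Qed.

Lemma psd_mulmx_eq0 (R : realFieldType) k (K : 'M[R]_k) (x : 'cV[R]_k) :
  sym_psd K -> (x^T *m K *m x) 0 0 = 0 -> K *m x = 0.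
Proof.
move=> [KT Kpsd] qx; apply/matrixP => i j; rewrite ord1 [RHS]mxE.
pose y : 'cV[R]_k := delta_mx i 0.
have -> : (K *m x) i 0 = (y^T *m K *m x) 0 0.
  by rewrite /y trmx_delta -mulmxA -rowE !mxE.
apply: (@quadratic_ge0_eq0 _ _ ((y^T *m K *m y) 0 0)) => t.
have xKy : x^T *m K *m y = (y^T *m K *m x)^T by rewrite !trmx_mul trmxK KT mulmxA.
have := Kpsd (x + t *: y).
have -> : (x + t *: y)^T = x^T + t *: y^T by apply/matrixP => a b; rewrite !mxE.
rewrite !mulmxDl !mulmxDr -!scalemxAl -!scalemxAr xKy.
move: qx; move: (x^T *m K *m x) (y^T *m K *m x) (y^T *m K *m y) => q b c q0.
by rewrite !mxE q0; lra.
Qed.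

Section Selection.
Variables (R : realFieldType) (n : nat).

Definition sel (S : {set 'I_n}) : 'M[R]_(#|S|, n) := rowsub enum_val 1%:M.

Lemma selT (S : {set 'I_n}) : (sel S)^T = colsub enum_val 1%:M.
Proof. by rewrite trmx_mxsub trmx1. Qed.

Lemma subvE S (w : 'cV[R]_n) : subv S w = sel S *m w.
Proof. by rewrite mul_rowsub_mx mul1mx; apply/matrixP=> i j; rewrite !mxE ord1. Qed.

Lemma subcolsE m S (A : 'M[R]_(m, n)) : subcols S A = A *m (sel S)^T.
Proof. by rewrite selT mulmx_colsub mulmx1; apply/matrixP=> i j; rewrite !mxE. Qed.

Lemma submE S T (H : 'M[R]_n) : subm S T H = sel S *m H *m (sel T)^T.
Proof.
by rewrite -subcolsE mul_rowsub_mx mul1mx; apply/matrixP=> i j; rewrite !mxE.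
Qed.

Lemma subcolE S l (H : 'M[R]_n) : subcol S l H = sel S *m H *m delta_mx l 0.
Proof.
by rewrite -mulmxA -colE mul_rowsub_mx mul1mx; apply/matrixP=> i j; rewrite !mxE.
Qed.

Lemma selT_sel_mul (S : {set 'I_n}) (x : 'cV[R]_n) :
  (sel S)^T *m (sel S *m x) = \col_i (if i \in S then x i 0 else 0).
Proof.
rewrite selT mul_rowsub_mx mul1mx; apply/matrixP=> i j; rewrite ord1 !mxE.
under eq_bigr do rewrite !mxE.
rewrite -(big_enum_val (fun k => (i == k)%:R * x k 0)) big_mkcond (bigD1 i) //=.
rewrite eqxx mul1r big1 ?addr0 // => k /negPf ki.
by rewrite eq_sym ki mul0r if_same.
Qed.

End Selection.

Arguments sel {R n}.

Lemma scalar_mx_entry (R : pzRingType) m n (X : 'M[R]_(m, n)) i j :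
  (X i j)%:M = delta_mx 0 i *m X *m delta_mx j 0 :> 'M_1.
Proof. by rewrite -rowE -colE [RHS]mx11_scalar !mxE. Qed.

Lemma scalar_mx1_inj (R : pzRingType) : injective (@scalar_mx R 1).
Proof.
by move=> a b /(congr1 (fun X : 'M[R]_1 => X 0 0)); rewrite !mxE eqxx !mulr1n.
Qed.

Lemma scalar_mx1_eq0 (R : pzRingType) (a : R) : (a%:M == 0 :> 'M[R]_1) = (a == 0).
Proof.
apply/eqP/eqP => [/(congr1 (fun X : 'M[R]_1 => X 0 0)) | ->]; last by rewrite raddf0.
by rewrite !mxE eqxx mulr1n.
Qed.

Lemma tr_mul_self_eq0 (R : realDomainType) k (v : 'cV[R]_k) :
  ((v^T *m v) 0 0 == 0) = (v == 0).
Proof.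
rewrite mxE psumr_eq0 => [|i _]; last by rewrite mxE -expr2 sqr_ge0.
apply/allP/eqP => [v0 | -> i _]; last by rewrite !mxE mulr0 eqxx.
apply/matrixP=> i j; rewrite ord1 mxE.
by have := v0 i (mem_index_enum i); rewrite /= mxE mulf_eq0 orbb => /eqP.
Qed.

Section Proposition.
Variables (R : realFieldType) (n m : nat).
Variables (H : 'M[R]_n) (M : 'M[R]_m) (A : 'M[R]_(m, n)).
Variables (l : 'I_n) (B N : {set 'I_n}).
Hypotheses (psdH : sym_psd H) (psdM : sym_psd M).
Hypotheses (lB : l \notin B) (partBlN : B :|: [set l] :|: N = [set: 'I_n]).

Local Notation K_B := (KB H A M B).
Local Notation K_l := (Kl H A M B l).
Local Notation k_l := (col_mx (subcol B l H) (col l A)).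

Lemma decomp_lB (x : 'cV[R]_n) : (forall i, i \in N -> x i 0 = 0) ->
  x = delta_mx l 0 *m (x l 0)%:M + (sel B)^T *m (sel B *m x).
Proof.
move=> xN; rewrite selT_sel_mul mul_mx_scalar; apply/matrixP=> i j; rewrite ord1 !mxE.
have : i \in B :|: [set l] :|: N by rewrite partBlN inE.
rewrite !inE; have [->|il] := eqVneq i l; first by rewrite (negPf lB) mulr1 addr0.
by rewrite mulr0 add0r orbF; case: ifP => // _ /xN.
Qed.

Lemma Kl_mul (x : 'cV[R]_n) (y : 'cV[R]_m) : (forall i, i \in N -> x i 0 = 0) ->
  K_l *m col_mx (x l 0)%:M (col_mx (subv B x) (- y)) =
  col_mx (row l (H *m x - A^T *m y))
         (col_mx (subv B (H *m x - A^T *m y)) (A *m x + M *m y)).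
Proof.
move=> xN; rewrite /Kl /KB mul_block_col mul_row_col mul_block_col.
rewrite !subvE submE subcolsE subcolE colE scalar_mx_entry rowE !trmx_mul psdH.1.
rewrite [in RHS](decomp_lB xN) trmx_delta.
rewrite !mulmxDr !mulmxN !mulmxA.
by rewrite trmxK !mul_col_mx add_col_mx mulNmx opprK !addrA.
Qed.

Lemma sys_dz dx dy dz : sys H A M B N dx dy dz -> dz = H *m dx - A^T *m dy.
Proof. by case=> dzE *; apply/eqP; rewrite eq_sym -subr_eq0 dzE. Qed.

Lemma sys_Kl dx dy dz : sys H A M B N dx dy dz ->
  K_l *m col_mx (dx l 0)%:M (col_mx (subv B dx) (- dy)) = col_mx (dz l 0)%:M 0.
Proof.
move=> hs; case: (hs) => _ Adx dxN dzB; rewrite Kl_mul // Adx -(sys_dz hs).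
have -> : subv B dz = 0 by apply/matrixP=> i j; rewrite !mxE dzB ?enum_valP.
by rewrite col_mx0 [row l dz]mx11_scalar mxE.
Qed.

Lemma sys_subvN dx dy dz : sys H A M B N dx dy dz ->
  subv N dz = subcol N l H *m (dx l 0)%:M + (subm B N H)^T *m subv B dx
              - (subcols N A)^T *m dy.
Proof.
move=> hs; case: (hs) => _ _ dxN _; rewrite (sys_dz hs).
rewrite !subvE subcolE submE subcolsE !trmx_mul psdH.1 trmxK.
by rewrite [in LHS](decomp_lB dxN) !mulmxDr !mulmxN !mulmxA.
Qed.

Lemma sys_mul_ge0 dx dy dz : sys H A M B N dx dy dz -> 0 <= dx l 0 * dz l 0.
Proof.
move=> hs; case: (hs) => _ Adx dxN dzB.
have -> : dx l 0 * dz l 0 = (dx^T *m dz) 0 0.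
  rewrite mxE (bigD1 l) //= big1 ?addr0; first by rewrite mxE.
  move=> i il; rewrite mxE.
  have : i \in B :|: [set l] :|: N by rewrite partBlN inE.
  rewrite !inE (negPf il) orbF => /orP [iB | iN]; first by rewrite dzB ?mulr0.
  by rewrite dxN ?mul0r.
have -> : dx^T *m dz = dx^T *m H *m dx + dy^T *m M *m dy.
  rewrite (sys_dz hs) mulmxBr !mulmxA -trmx_mul.
  have -> : A *m dx = - (M *m dy) by apply/eqP; rewrite -addr_eq0 Adx.
  by rewrite linearN /= trmx_mul psdM.1 mulNmx opprK.
by rewrite mxE addr_ge0 ?psdH.2 ?psdM.2.
Qed.

Lemma KB_sym : K_B^T = K_B.
Proof.
rewrite /KB tr_block_mx trmxK submE !trmx_mul trmxK psdH.1 !mulmxA.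
by rewrite linearN /= psdM.1.
Qed.

Lemma Kl_sym : K_l^T = K_l.
Proof. by rewrite /Kl tr_block_mx tr_scalar_mx tr_col_mx tr_row_mx !trmxK KB_sym. Qed.

Lemma Kl_mul_col0 (w : 'cV[R]_(#|B| + m)) :
  K_l *m col_mx 0 w = col_mx (k_l^T *m w) (K_B *m w).
Proof. by rewrite /Kl mul_block_col !mulmx0 !add0r tr_col_mx. Qed.

Hypothesis uKl : K_l \in unitmx.

Lemma KB_kl_null (w : 'cV[R]_(#|B| + m)) : K_B *m w = 0 -> k_l^T *m w = 0 -> w = 0.
Proof.
move=> KBw klw; have := Kl_mul_col0 w; rewrite KBw klw col_mx0.
by move/(unitmx_mul_eq0 uKl)/eqP; rewrite col_mx_eq0 => /andP [_ /eqP].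
Qed.

Lemma KB_null_dim1 (v w : 'cV[R]_(#|B| + m)) :
  K_B *m v = 0 -> v != 0 -> K_B *m w = 0 -> exists t, w = t *: v.
Proof.
move=> KBv v0 KBw.
have klv : (k_l^T *m v) 0 0 != 0.
  apply: contra v0 => /eqP klv0; apply/eqP/KB_kl_null => //.
  by rewrite [LHS]mx11_scalar klv0 raddf0.
exists ((k_l^T *m w) 0 0 / (k_l^T *m v) 0 0).
apply/eqP; rewrite -subr_eq0; apply/eqP/KB_kl_null.
  by rewrite mulmxBr -scalemxAr KBv KBw scaler0 subr0.
rewrite mulmxBr -scalemxAr; move: (k_l^T *m w) (k_l^T *m v) klv => a b b0.
by apply/matrixP=> i j; rewrite !ord1 !mxE divfK // subrr.
Qed.

Lemma KB_mul_col_eq0 (p : 'cV[R]_#|B|) (q : 'cV[R]_m) :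
  K_B *m col_mx p q = 0 -> p = 0.
Proof.
rewrite /KB mul_block_col => /eqP; rewrite col_mx_eq0 => /andP [/eqP e1 /eqP e2].
have ABp : subcols B A *m p = M *m q by apply/eqP; rewrite -subr_eq0 -mulNmx e2.
have pAB : p^T *m (subcols B A)^T = q^T *m M by rewrite -trmx_mul ABp trmx_mul psdM.1.
pose x := (sel B)^T *m p.
have xHx : x^T *m H *m x = p^T *m subm B B H *m p.
  by rewrite submE trmx_mul trmxK !mulmxA.
have sum0 : x^T *m H *m x + q^T *m M *m q = 0.
  by rewrite xHx -pAB -!mulmxA -mulmxDr e1 mulmx0.
have [xHx0 qMq0] : (x^T *m H *m x) 0 0 = 0 /\ (q^T *m M *m q) 0 0 = 0.
  move: sum0 (psdH.2 x) (psdM.2 q); move: (x^T *m H *m x) (q^T *m M *m q).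
  by move=> a b /matrixP/(_ 0 0); rewrite !mxE; lra.
have Hx := psd_mulmx_eq0 psdH xHx0; have Mq := psd_mulmx_eq0 psdM qMq0.
suff /eqP : col_mx p (0 : 'cV[R]_m) = 0 by rewrite col_mx_eq0 => /andP [/eqP].
apply: KB_kl_null.
  rewrite /KB mul_block_col !mulmx0 !addr0 submE -!mulmxA -/x Hx mulmx0.
  by rewrite ABp Mq col_mx0.
rewrite tr_col_mx mul_row_col mulmx0 addr0 subcolE !trmx_mul psdH.1.
by rewrite -!mulmxA -/x Hx mulmx0.
Qed.

Lemma sys0 : sys H A M B N 0 0 0.
Proof. by split; rewrite ?mulmx0 ?subr0 ?addr0 // => i _; rewrite mxE. Qed.

Lemma sys_unique dx dy dz dx' dy' dz' :
  sys H A M B N dx dy dz -> sys H A M B N dx' dy' dz' -> dz l 0 = dz' l 0 ->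
  [/\ dx l 0 = dx' l 0, subv B dx = subv B dx', dy = dy' & subv N dz = subv N dz'].
Proof.
move=> hs hs' dzl_eq.
have : K_l *m (col_mx (dx l 0)%:M (col_mx (subv B dx) (- dy))
               - col_mx (dx' l 0)%:M (col_mx (subv B dx') (- dy'))) = 0.
  by rewrite mulmxBr (sys_Kl hs) (sys_Kl hs') dzl_eq subrr.
move/(unitmx_mul_eq0 uKl)/eqP; rewrite subr_eq0 => /eqP.
case/eq_col_mx => /scalar_mx1_inj dxl_eq /eq_col_mx [dxB_eq /oppr_inj dy_eq].
by split => //; rewrite (sys_subvN hs) (sys_subvN hs') dxl_eq dxB_eq dy_eq.
Qed.

Lemma sys_dzl0 dx dy dz : sys H A M B N dx dy dz -> dz l 0 = 0 ->
  [/\ dx l 0 = 0, subv B dx = 0, dy = 0 & subv N dz = 0].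
Proof.
move=> hs dzl0; have [] := sys_unique hs sys0; first by rewrite dzl0 mxE.
by rewrite !subvE !mulmx0 mxE.
Qed.

Lemma sys_KB_unit dx dy dz : K_B \in unitmx -> sys H A M B N dx dy dz ->
  0 < dz l 0 -> 0 < dx l 0.
Proof.
move=> uKB hs dzl_gt0.
rewrite lt_def -(pmulr_lge0 _ dzl_gt0) (sys_mul_ge0 hs) andbT; apply/eqP => dxl0.
move: (sys_Kl hs); rewrite dxl0 raddf0 Kl_mul_col0.
case/eq_col_mx => klw /(unitmx_mul_eq0 uKB) w0; move: klw.
by rewrite w0 mulmx0 => /esym/eqP; rewrite scalar_mx1_eq0 (gt_eqF dzl_gt0).
Qed.

Lemma sys_KB_singular dx dy dz : K_B \notin unitmx -> sys H A M B N dx dy dz ->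
  0 < dz l 0 ->
  [/\ dx l 0 = 0, subv B dx = 0
     & [/\ mup 0 (char_poly K_B) = 1%N, K_B *m col_mx (0 : 'cV[R]_#|B|) dy = 0
          & col_mx (0 : 'cV[R]_#|B|) dy != 0]].
Proof.
move=> /unitmxPn [z z0 KBz] hs dzl_gt0.
have klz : k_l^T *m z != 0 by apply: contra z0 => /eqP klz0; apply/eqP/KB_kl_null.
have dxl0 : dx l 0 = 0.
  (* pair the [K_l]-system with [(0; z)], using the symmetry of [K_l] *)
  have := congr1 (mulmx (col_mx 0 z)^T) (sys_Kl hs).
  rewrite mulmxA -{1}Kl_sym -trmx_mul Kl_mul_col0 KBz !tr_col_mx !mul_row_col.
  rewrite !trmx0 !mul0mx !mulmx0 !addr0 mul_mx_scalar => /eqP.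
  by rewrite scaler_eq0 trmx_eq0 -tr_col_mx (negPf klz) orbF => /eqP.
move: (sys_Kl hs); rewrite dxl0 raddf0 Kl_mul_col0 => /eq_col_mx [klw KBw].
have dxB0 := KB_mul_col_eq0 KBw.
pose v := col_mx (0 : 'cV[R]_#|B|) dy.
have wE : col_mx (subv B dx) (- dy) = - v by rewrite dxB0 opp_col_mx oppr0.
have KBv : K_B *m v = 0 by apply/eqP; rewrite -oppr_eq0 -mulmxN -wE KBw.
have v0 : v != 0.
  apply: contraTneq dzl_gt0 => v0; move: klw; rewrite wE v0 oppr0 mulmx0.
  by move/esym/eqP; rewrite scalar_mx1_eq0 => /eqP ->; rewrite ltxx.
split=> //; split=> //; apply: (mup0_char_poly_eq1 (u := v^T) (v := v)) => //.
- by rewrite -KB_sym -trmx_mul KBv trmx0.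
- by rewrite tr_mul_self_eq0.
- by move=> w; apply: KB_null_dim1.
Qed.

End Proposition.

Theorem proposition4 (R : realFieldType) (n m : nat)
  (H : 'M[R]_n) (M : 'M[R]_m) (A : 'M[R]_(m, n))
  (l : 'I_n) (B N : {set 'I_n}) :
  sym_psd H -> sym_psd M ->
  l \notin B -> l \notin N -> [disjoint B & N] ->
  B :|: [set l] :|: N = [set: 'I_n] ->
  Kl H A M B l \in unitmx ->
  forall dzl : R, 0 <= dzl ->
  (dzl = 0 ->
     forall dx dy dz, sys H A M B N dx dy dz -> dz l 0 = dzl ->
       [/\ dx l 0 = 0, subv B dx = 0, dy = 0 & subv N dz = 0])
  /\
  (0 < dzl ->
     (forall dx dy dz dx' dy' dz',
        sys H A M B N dx dy dz -> dz l 0 = dzl ->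
        sys H A M B N dx' dy' dz' -> dz' l 0 = dzl ->
        [/\ dx l 0 = dx' l 0, subv B dx = subv B dx', dy = dy'
          & subv N dz = subv N dz'])
     /\
     (forall dx dy dz, sys H A M B N dx dy dz -> dz l 0 = dzl ->
        [/\ Kl H A M B l *m col_mx (dx l 0)%:M (col_mx (subv B dx) (- dy))
              = col_mx (1%:M : 'cV[R]_1) 0 *m dzl%:M,
            subv N dz = subcol N l H *m (dx l 0)%:M
                        + (subm B N H)^T *m subv B dx
                        - (subcols N A)^T *m dy
          & (KB H A M B \in unitmx /\ 0 < dx l 0)
            \/ [/\ KB H A M B \notin unitmx, dx l 0 = 0, subv B dx = 0
                 & [/\ mup 0 (char_poly (KB H A M B)) = 1%N,
                        KB H A M B *m col_mx (0 : 'cV[R]_#|B|) dy = 0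
                      & col_mx (0 : 'cV[R]_#|B|) dy != 0]]])).
Proof.
move=> psdH psdM lB _ _ partBlN uKl dzl _; split.
  by move=> -> dx dy dz hs; apply: (sys_dzl0 psdH lB partBlN uKl hs).
move=> dzl_gt0; split=> [dx dy dz dx' dy' dz' hs <- hs' dzl' | dx dy dz hs dzlE].
  by apply: (sys_unique psdH lB partBlN uKl hs hs'); rewrite dzl'.
rewrite -{}dzlE in dzl_gt0 *; split.
- by rewrite (sys_Kl psdH lB partBlN hs) mul_col_mx mul1mx mul0mx.
- exact: (sys_subvN psdH lB partBlN hs).
have [uKB | nuKB] := boolP (KB H A M B \in unitmx).
  by left; split; last exact: (sys_KB_unit psdH psdM lB partBlN uKB hs).
by right; have [] := sys_KB_singular psdH psdM lB partBlN uKl nuKB hs dzl_gt0.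
Qed.
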